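(* Let $n\ge 3$ and $1\le k<\frac{n}{2}$ be integers. The co-spectrum of the generalized Petersen graph $P(n,k)$ is exactly $\{3,4,5,\dots,n+2\}$; that is, for every integer $s$ with $3\le s\le n+2$, $P(n,k)$ has a bond of size exactly $s$, and every bond of $P(n,k)$ has size in $\{3,\dots,n+2\}$.
   Context: The generalized Petersen graph $P(n,k)$, for $n\ge 3$ and $1\le k<\frac n2$, has vertex set $\{x_1,\dots,x_n,y_1,\dots,y_n\}$ and edge set $\{x_ix_{i+1},\ x_iy_i,\ y_iy_{i+k} : i=1,\dots,n\}$, with subscripts read modulo $n$. A bond of a graph is a minimal nonempty edge-cut; equivalently, for a connected graph $G$, it is the set of edges $[X,Y]$ between the parts of a partition $V(G)=X\cup Y$ ($X,Y$ nonempty) such that $G[X]$ and $G[Y]$ are both connected. The co-spectrum of a graph is the set of all sizes of its bonds. *)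

From mathcomp Require Import all_boot.
Unset Printing Implicit Defensive.

(* Vertices of P(n,k): (false, i) is x_i and (true, i) is y_i, for i : 'I_n
   (indices 0..n-1 instead of 1..n; subscripts read modulo n). *)
Definition gp_vertex (n : nat) : finType := (bool * 'I_n)%type.

Definition gp_adj (n k : nat) (u v : gp_vertex n) : bool :=
  match u, v with
  | (false, i), (false, j) => (val j == (val i + 1) %% n) || (val i == (val j + 1) %% n)
  | (true, i), (true, j) => (val j == (val i + k) %% n) || (val i == (val j + k) %% n)
  | (false, i), (true, j) => i == j
  | (true, i), (false, j) => i == j
  end.

Definition gp_edges (n k : nat) : {set {set gp_vertex n}} :=
  [set e : {set gp_vertex n} |
     [exists u : gp_vertex n, exists v : gp_vertex n,
        gp_adj n k u v && (e == [set u; v])]].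

Definition edge_cut (n k : nat) (X : {set gp_vertex n}) : {set {set gp_vertex n}} :=
  [set e in gp_edges n k | (e :&: X != set0) && (e :\: X != set0)].

Definition induced_connected (n k : nat) (X : {set gp_vertex n}) : Prop :=
  forall u v, u \in X -> v \in X ->
    connect [rel a b | gp_adj n k a b && (a \in X) && (b \in X)] u v.

Definition is_bond (n k : nat) (F : {set {set gp_vertex n}}) : Prop :=
  exists X : {set gp_vertex n},
    [/\ X != set0, ~: X != set0, induced_connected n k X,
        induced_connected n k (~: X) & F = edge_cut n k X].

Definition cospectrum (n k : nat) : nat -> Prop :=
  fun s => exists F, is_bond n k F /\ #|F| = s.

From mathcomp Require Import all_boot zify.
Set Implicit Arguments. Unset Strict Implicit. Unset Printing Implicit Defensive.

(* Encoding a vertex set X by its outer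
   and inner indicator functions f, g : 'I_n -> bool, the cut [X, V \ X] has size
     changes f 1 + mismatches f g + changes g k,
   the number of i with f i <> f (i+1), plus those with f i <> g i, plus those
   with g i <> g (i+k).
   - Lower bound: for a nonempty proper X this sum is at least 3, because the two
     "changes" terms are even and a nonempty set invariant under i |-> i+k has at
     least three elements (as 2k < n).
   - Upper bound: P(n,k) is cubic, so 3|X| = 2 e(X) + |cut| where e(X) counts the
     edges inside X; a connected X contains a spanning tree, so e(X) >= |X| - 1 and
     |cut| <= |X| + 2.  Adding this for X and its complement gives |cut| <= n + 2.
   - Every size s in [3, n+2] is attained by X = {x_0..x_{t-1}} u {y_0..y_{a-1}}
     with t + a = s - 2, 0 < t <= n - k, a <= min(k, t): both sides are connected
     and the cut has size t + a + 2. *)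

Lemma ord_gt0 n (i : 'I_n) : 0 < n.
Proof. exact: leq_ltn_trans (ltn_ord i). Qed.

Definition cshift n (m : nat) (i : 'I_n) : 'I_n := Ordinal (ltn_pmod (i + m) (ord_gt0 i)).

Lemma cshiftE n m (i : 'I_n) : val (cshift m i) = (i + m) %% n.
Proof. by []. Qed.

Lemma modn_lt_double x n : x < n.*2 -> x %% n = if x < n then x else x - n.
Proof.
move=> x_lt; case: ltnP => x_ge; first by rewrite modn_small.
have -> : x = (x - n) + n by rewrite subnK.
rewrite modnDr modn_small ?addnK //; lia.
Qed.

Lemma cshift_inj n m : injective (@cshift n m).
Proof.
move=> i j /(congr1 val); rewrite !cshiftE => /eqP; rewrite eqn_modDr.
by rewrite !modn_small // => /eqP /val_inj.
Qed.

Lemma cshiftD n a b (i : 'I_n) : cshift a (cshift b i) = cshift (b + a) i.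
Proof. by apply: val_inj; rewrite !cshiftE modnDml addnA. Qed.

Lemma cshift_neq n m (i : 'I_n) : 0 < m < n -> cshift m i != i.
Proof.
move=> m_bounds; apply/eqP => /(congr1 val); rewrite cshiftE modn_lt_double.
  by case: ifP => /= ? ?; lia.
have := ltn_ord i; lia.
Qed.

Lemma sum_cshift n m (F : 'I_n -> nat) : \sum_i F (cshift m i) = \sum_i F i.
Proof. by rewrite [RHS](reindex_inj (@cshift_inj n m)). Qed.

Lemma shift1_invariant_const n (f : 'I_n -> bool) :
  (forall i, f (cshift 1 i) = f i) -> forall i j, f i = f j.
Proof.
move=> f1 i j.
have f_shift m : f (cshift m i) = f i.
  elim: m => [|m IH]; last by rewrite -addn1 -cshiftD f1.
  by congr f; apply: val_inj; rewrite cshiftE addn0 modn_small.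
rewrite -(f_shift (j + n - i)); congr f; apply: val_inj; rewrite cshiftE.
have -> : i + (j + n - i) = j + n by have := ltn_ord i; lia.
by rewrite modnDr modn_small.
Qed.

Lemma set2_inj (T : finType) (a b c d : T) : a != b -> [set a; b] = [set c; d] ->
  (a = c /\ b = d) \/ (a = d /\ b = c).
Proof.
move=> ab e.
have /set2P[] : a \in [set c; d] by rewrite -e set21.
all: have /set2P[] : b \in [set c; d] by rewrite -e set22.
all: move=> ? ?; subst; rewrite ?eqxx // in ab; by [left | right].
Qed.

Lemma set2I_neq0 (T : finType) (a b : T) (X : {set T}) :
  ([set a; b] :&: X != set0) = (a \in X) || (b \in X).
Proof.
apply/set0Pn/orP => [[x]|[aX|bX]].
- by rewrite !inE => /andP [/orP [] /eqP -> ->]; auto.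
- by exists a; rewrite !inE eqxx aX.
- by exists b; rewrite !inE eqxx orbT bX.
Qed.

Lemma set2D_neq0 (T : finType) (a b : T) (X : {set T}) :
  ([set a; b] :\: X != set0) = (a \notin X) || (b \notin X).
Proof.
apply/set0Pn/orP => [[x]|[aX|bX]].
- by rewrite !inE => /andP [xX /orP [] /eqP e]; subst; auto.
- by exists a; rewrite !inE eqxx aX.
- by exists b; rewrite !inE eqxx orbT bX.
Qed.

Lemma card_setP (T : finType) (P : pred T) : #|[set p | P p]| = \sum_p (P p : nat).
Proof. by rewrite -sum1dep_card big_mkcond; apply: eq_bigr => p _; case: (P p). Qed.

(* Boolean functions on 'I_n: the combinatorial core of the lower bound. *)

Section BooleanFunctions.
Variable n : nat.
Implicit Types (f g : 'I_n -> bool) (m : nat).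

Definition changes f m := \sum_i (f i != f (cshift m i) : nat).
Definition mismatches f g := \sum_i (f i != g i : nat).

Lemma changes_card f m : changes f m = #|[set i | f i != f (cshift m i)]|.
Proof. by rewrite card_setP. Qed.

Lemma mismatches_card f g : mismatches f g = #|[set i | f i != g i]|.
Proof. by rewrite card_setP. Qed.

(* Going around the cycle, f changes value an even number of times: each
   change counts once in changes f m and the number of true values is
   preserved by the shift. *)
Lemma changes_even f m : ~~ odd (changes f m).
Proof.
have : changes f m + (\sum_i (f i && f (cshift m i) : nat)).*2 = (\sum_i (f i : nat)).*2.
  rewrite -!addnn {2}(_ : \sum_i (f i : nat) = \sum_i (f (cshift m i) : nat)).
    rewrite /changes -!big_split /=.
    by apply: eq_bigr => i _; case: (f i); case: (f (cshift m i)).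
  by rewrite (@sum_cshift n m (fun i => (f i : nat))).
by move/(congr1 odd); rewrite oddD !odd_double addbF => ->.
Qed.

Lemma changes_cases f m : (forall i, f (cshift m i) = f i) \/ 2 <= changes f m.
Proof.
have [/eqP|pos] := posnP (changes f m); last first.
  by right; move: (changes_even f m) pos; case: (changes f m) => [|[|]].
rewrite sum_nat_eq0 => /forallP zero; left => i.
by move: (zero i); case: (f i); case: (f (cshift m i)).
Qed.

(* A nonempty set invariant under the shift by k, with 0 < k < n/2, contains
   the three distinct points j, j + k, j + 2k. *)
Lemma shift_invariant_card k (P : pred 'I_n) j : 0 < k -> k.*2 < n ->
  (forall i, P (cshift k i) = P i) -> P j -> 3 <= #|[set i | P i]|.
Proof.
move=> k_gt0 k2_lt Pk Pj.
have n1 : cshift k j != j by apply: cshift_neq; lia.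
have n2 : cshift k (cshift k j) != j by rewrite cshiftD; apply: cshift_neq; lia.
have n3 : cshift k (cshift k j) != cshift k j by apply: contra n1 => /eqP /cshift_inj ->.
have -> : 3 = #|cshift k (cshift k j) |: [set j; cshift k j]|.
  by rewrite cardsU1 cards2 !inE (negbTE n3) (negbTE n2) eq_sym n1.
apply: subset_leq_card; apply/subsetP => x; rewrite !inE.
by case/or3P => /eqP ->; rewrite ?Pk.
Qed.

Lemma changes_mismatches_ge3 k f g : 0 < k -> k.*2 < n ->
  (forall b, exists i, (f i != b) || (g i != b)) ->
  3 <= changes f 1 + mismatches f g + changes g k.
Proof.
move=> k_gt0 k2_lt nonconst.
have [f1|A2] := changes_cases f 1.
  have [i0 _] := nonconst true.
  have f_const i : f i = f i0 := shift1_invariant_const f1 i i0.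
  have [i1] := nonconst (f i0); rewrite f_const eqxx /= => gi1.
  have B_eq : mismatches f g = #|[set i | g i != f i0]|.
    by rewrite mismatches_card; apply: eq_card => i; rewrite !inE f_const eq_sym.
  have B1 : 0 < mismatches f g.
    by rewrite B_eq card_gt0; apply/set0Pn; exists i1; rewrite inE.
  have [gk|C2] := changes_cases g k; last by lia.
  suff : 3 <= mismatches f g by lia.
  by rewrite B_eq; apply: (shift_invariant_card k_gt0 k2_lt _ gi1) => i; rewrite gk.
have [B0|B1] := posnP (mismatches f g); last by lia.
have fg i : f i = g i.
  move: B0 => /eqP; rewrite mismatches_card cards_eq0 => /eqP /setP /(_ i).
  by rewrite !inE => /negbFE /eqP.
have [gk|C2] := changes_cases g k; last by lia.
have [j] : exists j, j \in [set i | f i != f (cshift 1 i)].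
  by apply/card_gt0P; rewrite -changes_card; lia.
rewrite inE => fj; suff : 3 <= changes f 1 by lia.
rewrite changes_card; apply: (shift_invariant_card k_gt0 k2_lt _ fj) => i.
by rewrite cshiftD addnC -cshiftD !fg !gk.
Qed.

End BooleanFunctions.

(* Spanning-tree bound: a connected vertex set X of a graph spans at least
   |X| - 1 edges. *)

Lemma path_exit (T : finType) (r : rel T) (S : {set T}) x p :
  path r x p -> x \in S -> last x p \notin S ->
  exists u v, [/\ u \in S, v \notin S & r u v].
Proof.
elim: p x => [|y p IH] x /=; first by move=> _ ->.
case/andP=> rxy ryp xS; case yS: (y \in S); first exact: IH.
by exists x, y; rewrite yS.
Qed.

Section SpanningTreeBound.
Variables (T I : finType) (e : rel T) (E : I -> {set T}) (X : {set T}) (r : T).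
Hypothesis edge_named : forall u v, e u v -> exists p, E p = [set u; v].
Hypothesis rX : r \in X.
Hypothesis X_connected :
  forall v, v \in X -> connect [rel a b | e a b && (a \in X) && (b \in X)] r v.

Lemma grow_connected_part (S : {set T}) : r \in S -> S \proper X ->
  exists v, [/\ v \in X, v \notin S &
                #|[set p | E p \subset S]| < #|[set p | E p \subset v |: S]|].
Proof.
move=> rS /properP [SX [w wX wS]].
have /connectP [q q_path w_last] := X_connected wX.
have q_exits : last r q \notin S by rewrite -w_last.
have [u [v [uS vS /andP [/andP [euv _] vX]]]] := path_exit q_path rS q_exits.
exists v; split => //; have [p Ep] := edge_named euv.
apply: proper_card; apply/properP; split.
  by apply/subsetP => p'; rewrite !inE => /subset_trans; apply; apply: subsetUr.
by exists p; rewrite inE Ep subUset !sub1set ?inE ?eqxx ?uS ?orbT ?(negbTE vS).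
Qed.

(* Growing {r} to X one vertex at a time, each step adds an internal edge. *)
Lemma connected_card_le : #|X| <= #|[set p | E p \subset X]| + 1.
Proof.
pose tree_bound (S : {set T}) := #|S| <= #|[set p | E p \subset S]| + 1.
have extend (S : {set T}) : r \in S -> S \proper X -> tree_bound S ->
    exists S' : {set T}, [/\ r \in S', S' \subset X, #|X :\: S'| < #|X :\: S| & tree_bound S'].
  move=> rS SX_proper bound_S; have [v [vX vS grown]] := grow_connected_part rS SX_proper.
  exists (v |: S); split.
  - by rewrite !inE rS orbT.
  - by rewrite subUset sub1set vX proper_sub.
  - apply: proper_card; apply/properP; split; first by apply: setDS; apply: subsetUr.
    by exists v; rewrite !inE ?eqxx ?vX ?(negbTE vS).
  - by move: bound_S; rewrite /tree_bound cardsU1 vS /=; lia.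
suff grow m (S : {set T}) :
    #|X :\: S| <= m -> r \in S -> S \subset X -> tree_bound S -> tree_bound X.
  apply: (grow #|X| [set r]); rewrite ?set11 ?sub1set //.
  - by rewrite subset_leq_card ?subD1set.
  - by rewrite /tree_bound cards1 leq_addl.
elim: m S => [|m IH] S le_m rS SX bound_S; have [<- //|SX_proper] := eqVproper SX;
  have [S' [rS' S'X lt_m bound_S']] := extend S rS SX_proper bound_S.
  by lia.
by apply: (IH S') => //; lia.
Qed.

End SpanningTreeBound.

Section GeneralizedPetersen.
Variables n k : nat.
Implicit Types (X : {set gp_vertex n}) (p : 'I_3 * 'I_n).

(* The edge named (c, i): c = 0 is the outer edge x_i x_{i+1}, c = 1 the spoke
   x_i y_i and c = 2 the inner edge y_i y_{i+k}. *)
Definition edge_tail (p : 'I_3 * 'I_n) : gp_vertex n :=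
  match val p.1 with 0 | 1 => (false, p.2) | _ => (true, p.2) end.
Definition edge_head (p : 'I_3 * 'I_n) : gp_vertex n :=
  match val p.1 with
  | 0 => (false, cshift 1 p.2) | 1 => (true, p.2) | _ => (true, cshift k p.2)
  end.
Definition edge_of (p : 'I_3 * 'I_n) : {set gp_vertex n} := [set edge_tail p; edge_head p].

Lemma gp_adj_sym : symmetric (gp_adj n k).
Proof. by move=> [[] i] [[] j] //=; rewrite orbC // eq_sym. Qed.

Lemma gp_adjE (i j : 'I_n) :
  [/\ gp_adj n k (false, i) (false, j) = (j == cshift 1 i) || (i == cshift 1 j),
      gp_adj n k (true, i) (true, j) = (j == cshift k i) || (i == cshift k j),
      gp_adj n k (false, i) (true, j) = (i == j) &
      gp_adj n k (true, i) (false, j) = (i == j)].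
Proof. by rewrite /gp_adj -!val_eqE. Qed.

Lemma edge_of_adj p : gp_adj n k (edge_tail p) (edge_head p).
Proof. by case: p => [[[|[|[|m]]] ?] i] //=; rewrite /= eqxx. Qed.

Lemma edge_of_onto u v : gp_adj n k u v -> exists p, edge_of p = [set u; v].
Proof.
pose c0 := Ordinal (isT : 0 < 3); pose c1 := Ordinal (isT : 1 < 3).
pose c2 := Ordinal (isT : 2 < 3).
case: u v => [[] i] [[] j]; have [E1 E2 E3 E4] := gp_adjE i j; rewrite ?E1 ?E2 ?E3 ?E4.
- by case/orP=> /eqP ->; [exists (c2, i) | exists (c2, j); rewrite /edge_of setUC].
- by move=> /eqP ->; exists (c1, j); rewrite /edge_of setUC.
- by move=> /eqP ->; exists (c1, j).
- by case/orP=> /eqP ->; [exists (c0, i) | exists (c0, j); rewrite /edge_of setUC].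
Qed.

Hypotheses (k_gt0 : 0 < k) (k2_lt : k.*2 < n).

Lemma edge_ends_neq p : edge_tail p != edge_head p.
Proof.
case: p => [[[|[|[|m]]] ?] i] //=; rewrite xpair_eqE /= eq_sym ?cshift_neq //; lia.
Qed.

(* Distinct names give distinct edges: a collision would force 2 = 0 or
   2k = 0 modulo n. *)
Lemma edge_of_inj : injective edge_of.
Proof.
move=> p q e.
have := set2_inj (edge_ends_neq p) e.
case: p e => [[[|[|[|m]]] ?] i] //=; case: q => [[[|[|[|m']]] ?] j] //= e;
  rewrite /edge_tail /edge_head /= =>
    -[[/pair_equal_spec [_ h] /pair_equal_spec [_ h']]|
      [/pair_equal_spec [_ h] /pair_equal_spec [_ h']]] //;
  try (subst; congr pair; exact: val_inj).
- have : cshift 2 i != i by apply: cshift_neq; lia.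
  by rewrite -[2]/(1 + 1) -cshiftD h' -h eqxx.
- have : cshift (k + k) i != i by apply: cshift_neq; lia.
  by rewrite -cshiftD h' -h eqxx.
Qed.

Lemma gp_edgesE : gp_edges n k = edge_of @: setT.
Proof.
apply/setP => e; rewrite inE; apply/existsP/imsetP.
- case=> u /existsP [v /andP [uv /eqP ->]].
  by have [p <-] := edge_of_onto uv; exists p.
- case=> p _ ->; exists (edge_tail p); apply/existsP; exists (edge_head p).
  by rewrite edge_of_adj eqxx.
Qed.

Definition crosses (X : {set gp_vertex n}) p := (edge_tail p \in X) != (edge_head p \in X).

Lemma edge_of_crosses X p :
  (edge_of p :&: X != set0) && (edge_of p :\: X != set0) = crosses X p.
Proof.
rewrite set2I_neq0 set2D_neq0 /crosses.
by case: (edge_tail p \in X); case: (edge_head p \in X).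
Qed.

Lemma card_edge_cut X : #|edge_cut n k X| = #|[set p | crosses X p]|.
Proof.
rewrite -(card_imset _ edge_of_inj); congr #|pred_of_set _|.
apply/setP => e; rewrite inE gp_edgesE.
apply/andP/imsetP => [[/imsetP [p _ ->] cut_p]|[p crosses_p ->]].
  by exists p; rewrite // inE -edge_of_crosses.
by rewrite imset_f ?inE // edge_of_crosses; rewrite inE in crosses_p.
Qed.

Lemma sum_edge_classes (F : 'I_3 * 'I_n -> nat) :
  \sum_p F p = \sum_i (F (Ordinal (isT : 0 < 3), i) + F (Ordinal (isT : 1 < 3), i)
                       + F (Ordinal (isT : 2 < 3), i)).
Proof.
rewrite (eq_bigr (fun p => F (p.1, p.2))); last by case.
rewrite -(pair_bigA _ (fun c i => F (c, i))) /=.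
rewrite !big_ord_recl big_ord0 addn0 addnA -!big_split /=.
by apply: eq_bigr => i _; congr (F (_, _) + F (_, _) + F (_, _)); apply: val_inj.
Qed.

Definition outer_in (X : {set gp_vertex n}) (i : 'I_n) := (false, i) \in X.
Definition inner_in (X : {set gp_vertex n}) (i : 'I_n) := (true, i) \in X.

Lemma cut_formula X :
  #|edge_cut n k X| = changes (outer_in X) 1 + mismatches (outer_in X) (inner_in X)
                      + changes (inner_in X) k.
Proof. by rewrite card_edge_cut card_setP sum_edge_classes -!big_split. Qed.

Lemma card_vertices X : #|X| = \sum_i (outer_in X i : nat) + \sum_i (inner_in X i : nat).
Proof.
rewrite -sum1_card big_mkcond /=.
rewrite (eq_bigr (fun v => if (v.1, v.2) \in X then 1 else 0)); last by case.
rewrite -(pair_bigA _ (fun b i => if (b, i) \in X then 1 else 0)) /= big_bool /= addnC.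
by congr (_ + _); apply: eq_bigr => i _; rewrite /outer_in /inner_in; case: (_ \in X).
Qed.

Definition edges_inside (X : {set gp_vertex n}) := #|[set p | edge_of p \subset X]|.

(* P(n,k) is cubic: the 3|X| edge ends at vertices of X are the two ends of
   each inner edge and one end of each cut edge. *)
Lemma handshake X : 3 * #|X| = (edges_inside X).*2 + #|edge_cut n k X|.
Proof.
rewrite card_edge_cut /edges_inside !card_setP -mul2n big_distrr -big_split /=.
have -> : \sum_p (2 * (edge_of p \subset X) + crosses X p) =
          \sum_p ((edge_tail p \in X) + (edge_head p \in X) : nat).
  apply: eq_bigr => p _; rewrite /edge_of subUset !sub1set /crosses.
  by case: (edge_tail p \in X); case: (edge_head p \in X).
rewrite sum_edge_classes !big_split /= card_vertices mulnDr /edge_tail /edge_head /=.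
have shift_outer := @sum_cshift n 1 (fun i => (outer_in X i : nat)).
have shift_inner := @sum_cshift n k (fun i => (inner_in X i : nat)).
rewrite /outer_in /inner_in /= in shift_outer shift_inner *.
rewrite shift_outer shift_inner; lia.
Qed.

(* If X is connected, e(X) >= |X| - 1, hence |cut| <= |X| + 2. *)
Lemma cut_le_connected X :
  X != set0 -> induced_connected n k X -> #|edge_cut n k X| <= #|X| + 2.
Proof.
move=> /set0Pn [r rX] X_conn.
have := handshake X.
have := connected_card_le (@edge_of_onto) rX (fun v vX => X_conn r v rX vX).
rewrite /edges_inside; lia.
Qed.

Lemma edge_cutC X : edge_cut n k (~: X) = edge_cut n k X.
Proof. by apply/setP => e; rewrite !inE !setDE setCK; congr (_ && _); rewrite andbC. Qed.

Lemma bond_le X : X != set0 -> ~: X != set0 ->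
  induced_connected n k X -> induced_connected n k (~: X) -> #|edge_cut n k X| <= n + 2.
Proof.
move=> X0 Xc0 X_conn Xc_conn.
have := cut_le_connected X0 X_conn; have := cut_le_connected Xc0 Xc_conn.
rewrite edge_cutC; have := cardsC X; rewrite card_prod card_bool card_ord; lia.
Qed.

Lemma cut_ge3 X : X != set0 -> ~: X != set0 -> 3 <= #|edge_cut n k X|.
Proof.
move=> /set0Pn [[[] i] iX] /set0Pn [[[] j] jXc]; rewrite cut_formula;
  apply: changes_mismatches_ge3 => // -[]; rewrite inE in jXc.
all: rewrite /inner_in /outer_in.
all: by [exists i; rewrite iX ?orbT | exists j; rewrite (negbTE jXc) ?orbT].
Qed.

Definition vertex_set (f g : 'I_n -> bool) : {set gp_vertex n} :=
  [set v | if v.1 then g v.2 else f v.2].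

Lemma cut_vertex_set (f g : 'I_n -> bool) :
  #|edge_cut n k (vertex_set f g)| = changes f 1 + mismatches f g + changes g k.
Proof.
rewrite cut_formula /changes /mismatches /outer_in /inner_in.
by congr (_ + _ + _); apply: eq_bigr => i _; rewrite !inE.
Qed.

End GeneralizedPetersen.

(* Explicit bonds of every size in [3, n+2]. *)

Definition below n t (i : 'I_n) : bool := i < t.
Arguments below : clear implicits.

Lemma sum_range (F : nat -> nat) lo hi c :
  (forall i, lo <= i < hi -> F i = c) -> \sum_(lo <= i < hi) F i = (hi - lo) * c.
Proof. by move=> F_const; rewrite -sum_nat_const_nat; apply: eq_big_nat. Qed.

Ltac case_cmp := repeat match goal with
  | |- context [if _ then _ else _] => let h := fresh in case: ifP => h
  | |- context [?a < ?b] => let h := fresh in case: (ltnP a b) => h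
  | |- context [?a <= ?b] => let h := fresh in case: (leqP a b) => h
  end; simpl; try lia.

Lemma changes_below_1 n t : 0 < t < n -> changes (below n t) 1 = 2.
Proof.
move=> t_bounds; rewrite /changes /below; under eq_bigr do rewrite cshiftE.
pose F i := ((i < t) != ((i + 1) %% n < t) : nat).
rewrite -(big_mkord xpredT F) (@big_cat_nat _ _ _ (t - 1)) /=; try lia.
rewrite (@big_cat_nat _ _ _ t (t - 1)) /=; try lia.
rewrite (@big_cat_nat _ _ _ (n - 1) t) /=; try lia.
rewrite (@sum_range F 0 (t - 1) 0) ?(@sum_range F (t - 1) t 1) ?(@sum_range F t (n - 1) 0)
  ?(@sum_range F (n - 1) n 1); try lia;
  by move=> i i_range; rewrite /F modn_lt_double; try lia; case_cmp.
Qed.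

Lemma mismatches_below n t a : a <= t <= n -> mismatches (below n t) (below n a) = t - a.
Proof.
move=> bounds; rewrite /mismatches /below.
pose F i := ((i < t) != (i < a) : nat).
rewrite -(big_mkord xpredT F) (@big_cat_nat _ _ _ a) /=; try lia.
rewrite (@big_cat_nat _ _ _ t a) /=; try lia.
rewrite (@sum_range F 0 a 0) ?(@sum_range F a t 1) ?(@sum_range F t n 0); try lia;
  by move=> i i_range; rewrite /F; case_cmp.
Qed.

(* The shift by k, with a <= k < n/2, moves the arc of length a off itself:
   a points leave the arc and a points enter it. *)
Lemma changes_below_k n k a : a <= k -> k.*2 < n -> changes (below n a) k = a.*2.
Proof.
move=> a_le k2_lt; rewrite /changes /below; under eq_bigr do rewrite cshiftE.
pose F i := ((i < a) != ((i + k) %% n < a) : nat).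
rewrite -(big_mkord xpredT F) (@big_cat_nat _ _ _ a) /=; try lia.
rewrite (@big_cat_nat _ _ _ (n - k) a) /=; try lia.
rewrite (@big_cat_nat _ _ _ (n - k + a) (n - k)) /=; try lia.
rewrite (@sum_range F 0 a 1) ?(@sum_range F a (n - k) 0) ?(@sum_range F (n - k) (n - k + a) 1)
  ?(@sum_range F (n - k + a) n 0); try lia;
  by move=> i i_range; rewrite /F modn_lt_double; try lia; case_cmp.
Qed.

Definition arc_set n t a : {set gp_vertex n} := vertex_set (below n t) (below n a).

Lemma in_arc_set n t a b (i : 'I_n) : ((b, i) \in arc_set n t a) = if b then i < a else i < t.
Proof. by rewrite inE. Qed.

Section ArcBonds.
Variables n k : nat.
Implicit Types X : {set gp_vertex n}.

Definition within (X : {set gp_vertex n}) : rel (gp_vertex n) :=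
  [rel u v | gp_adj n k u v && (u \in X) && (v \in X)].

Lemma within_sym X : symmetric (within X).
Proof.
by move=> u v; rewrite /within /= gp_adj_sym; case: (u \in X); case: (v \in X); rewrite ?andbF.
Qed.

Lemma connected_from X x0 :
  (forall v, v \in X -> connect (within X) x0 v) -> induced_connected n k X.
Proof.
move=> reach u v uX vX; apply: connect_trans (reach v vX).
by rewrite (sym_connect_sym (@within_sym X)); apply: reach.
Qed.

Lemma connect_step X u v w : connect (within X) u v -> gp_adj n k v w ->
  v \in X -> w \in X -> connect (within X) u w.
Proof.
by move=> uv vw vX wX; apply: connect_trans uv (connect1 _); rewrite /within /= vw vX wX.
Qed.

Lemma outer_run X (i j : 'I_n) : i <= j ->
  (forall l : 'I_n, i <= l <= j -> (false, l) \in X) -> connect (within X) (false, i) (false, j).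
Proof.
move=> ij run; have [d] : exists d, j = i + d :> nat by exists (j - i); lia.
elim: d j ij run => [|d IH] j ij run j_eq.
  by rewrite (_ : j = i) //; apply: val_inj => /=; rewrite j_eq addn0.
have j'_lt : i + d < n by have := ltn_ord j; lia.
apply: (@connect_step _ _ (false, Ordinal j'_lt)).
- apply: IH => //= [|l l_range]; first lia.
  by apply: run; move: l_range => /=; lia.
- by rewrite /gp_adj /= j_eq modn_small ?addn1 ?addnS ?eqxx //; have := ltn_ord j; lia.
- by apply: run => /=; lia.
- by apply: run; lia.
Qed.

(* Parameters of X_{t,a}; t + k <= n keeps the inner edges y_j y_{j+k}, j < t,
   from wrapping around. *)
Variables t a : nat.
Hypotheses (k_gt0 : 0 < k) (t_gt0 : 0 < t) (tk_le : t + k <= n) (a_le_t : a <= t).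

(* X_{t,a} is connected: the outer run x_0 .. x_{t-1} carries the spokes to
   y_0 .. y_{a-1}, a <= t. *)
Lemma arc_set_connected : induced_connected n k (arc_set n t a).
Proof.
have n_gt0 : 0 < n by lia.
pose x0 : gp_vertex n := (false, Ordinal n_gt0).
have outer_reach (i : 'I_n) : i < t -> connect (within (arc_set n t a)) x0 (false, i).
  by move=> i_lt; apply: outer_run => // l /andP [_ l_le]; rewrite in_arc_set; lia.
apply: (@connected_from _ x0) => -[[] i]; rewrite in_arc_set => i_lt.
  apply: (@connect_step _ _ (false, i)); rewrite ?in_arc_set //=; last by lia.
  by apply: outer_reach; lia.
exact: outer_reach.
Qed.

(* Its complement is connected: the outer run x_t .. x_{n-1} reaches y_j
   directly if j >= t, and through inner edges y_j y_{j+k} otherwise (no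
   wrap-around since t + k <= n). *)
Lemma arc_set_compl_connected : induced_connected n k (~: arc_set n t a).
Proof.
set Y := ~: arc_set n t a.
have last_lt : n.-1 < n by lia.
pose x_last : gp_vertex n := (false, Ordinal last_lt).
have outer_reach (i : 'I_n) : t <= i -> connect (within Y) (false, i) x_last.
  move=> t_le; apply: outer_run => [|l /andP [l_ge _]].
    by rewrite /=; have := ltn_ord i; lia.
  by rewrite in_setC in_arc_set -leqNgt; lia.
have spoke (j : 'I_n) : t <= j -> connect (within Y) (true, j) x_last.
  move=> t_le_j; apply: connect_trans (outer_reach j t_le_j); apply: connect1.
  by rewrite /within /= /Y !in_setC !in_arc_set eqxx -!leqNgt; lia.
have inner_reach d (j : 'I_n) : t - j <= d -> a <= j -> connect (within Y) (true, j) x_last.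
  elim: d j => [|d IH] j j_dist a_le_j; have [/spoke //|j_lt_t] := leqP t j.
    by lia.
  have jk_lt : j + k < n by lia.
  apply: connect_trans (IH (Ordinal jk_lt) _ _); rewrite /=; try lia.
  apply: connect1; rewrite /within /= /Y !in_setC !in_arc_set -!leqNgt.
  by rewrite modn_small ?eqxx //=; lia.
apply: (@connected_from _ x_last) => -[[] i]; rewrite in_setC in_arc_set -leqNgt => i_ge.
  by rewrite (sym_connect_sym (@within_sym Y)); apply: (inner_reach (t - i)).
by rewrite (sym_connect_sym (@within_sym Y)); apply: outer_reach.
Qed.

End ArcBonds.

Lemma card_arc_cut n k t a : 0 < k -> k.*2 < n -> 0 < t -> t + k <= n -> a <= k -> a <= t ->
  #|edge_cut n k (arc_set n t a)| = t + a + 2.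
Proof.
move=> k_gt0 k2_lt t_gt0 tk_le a_le_k a_le_t.
rewrite cut_vertex_set // changes_below_1 ?mismatches_below ?changes_below_k //; lia.
Qed.

Lemma arc_set_bond n k t a : 0 < k -> 0 < t -> t + k <= n -> a <= t ->
  is_bond n k (edge_cut n k (arc_set n t a)).
Proof.
move=> k_gt0 t_gt0 tk_le a_le_t.
have first_lt : 0 < n by lia.
have last_lt : n.-1 < n by lia.
exists (arc_set n t a); split => //.
- by apply/set0Pn; exists (false, Ordinal first_lt); rewrite in_arc_set.
- by apply/set0Pn; exists (false, Ordinal last_lt); rewrite in_setC in_arc_set /=; lia.
- exact: arc_set_connected.
- exact: arc_set_compl_connected.
Qed.

Theorem theorem1p6 (n k : nat) :
  3 <= n -> 1 <= k -> k.*2 < n ->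
  forall s : nat, cospectrum n k s <-> 3 <= s <= n + 2.
Proof.
move=> n_ge3 k_gt0 k2_lt s; split.
  case=> _ [[X [X0 Xc0 X_conn Xc_conn ->]] <-].
  by apply/andP; split; [exact: cut_ge3 | exact: bond_le].
case/andP=> s_ge3 s_le.
pose t := minn (s - 2) (n - k); pose a := s - 2 - t.
have [t_gt0 tk_le a_le_k a_le_t] : [/\ 0 < t, t + k <= n, a <= k & a <= t].
  by rewrite /a /t; split; lia.
exists (edge_cut n k (arc_set n t a)); split; first exact: arc_set_bond.
by rewrite card_arc_cut // /a /t; lia.
Qed.
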